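(* For all terms $s,t$ and $k\in\mathbb N$: $s\Downarrow_k t$ holds if and only if $s\succ^k t$ and $t$ is an abstraction.
   Context: Terms (de Bruijn): $s::=n\mid st\mid\lambda s$. Substitution $k^k_u=u$, $n^k_u=n$ ($n\ne k$), $(st)^k_u=(s^k_u)(t^k_u)$, $(\lambda s)^k_u=\lambda(s^{k+1}_u)$. Reduction: $(\lambda s)(\lambda t)\succ s^0_{\lambda t}$; $s\succ s'\Rightarrow st\succ s't$; $t\succ t'\Rightarrow(\lambda s)t\succ(\lambda s)t'$; $\succ^k$ is $k$-fold reduction. The big-step relation $s\Downarrow_k t$ is defined inductively by: $\lambda s\Downarrow_0\lambda s$; and if $s\Downarrow_{k_1}\lambda s'$, $t\Downarrow_{k_2}\lambda t'$ and $s'^0_{\lambda t'}\Downarrow_{k_3}u$, then $st\Downarrow_{k_1+k_2+1+k_3}u$. *)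

From Stdlib Require Import Arith.

Inductive term : Type :=
| var : nat -> term
| app : term -> term -> term
| lam : term -> term.

(* Substitution s^k_u (no shifting, as in the paper). *)
Fixpoint subst (s : term) (k : nat) (u : term) : term :=
  match s with
  | var n => if Nat.eqb n k then u else var n
  | app s1 s2 => app (subst s1 k u) (subst s2 k u)
  | lam s1 => lam (subst s1 (S k) u)
  end.

Inductive step : term -> term -> Prop :=
| stepBeta s t : step (app (lam s) (lam t)) (subst s 0 (lam t))
| stepAppL s s' t : step s s' -> step (app s t) (app s' t)
| stepAppR s t t' : step t t' -> step (app (lam s) t) (app (lam s) t').

Inductive pow_step : nat -> term -> term -> Prop :=
| pow0 s : pow_step 0 s s
| powS k s s' t : step s s' -> pow_step k s' t -> pow_step (S k) s t.

Inductive eval : term -> nat -> term -> Prop :=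
| evalLam s : eval (lam s) 0 (lam s)
| evalApp s t s' t' u k1 k2 k3 :
    eval s k1 (lam s') -> eval t k2 (lam t') -> eval (subst s' 0 (lam t')) k3 u ->
    eval (app s t) (k1 + k2 + 1 + k3) u.

Definition is_abstraction (t : term) : Prop := exists t', t = lam t'.

(* Evaluating [app s t] reduces [s] to [lam s'], then [t] to [lam t'], fires the
   redex and evaluates the body, so an evaluation derivation of cost [k] unfolds
   into [k] reduction steps ending in an abstraction.  Conversely, evaluation is
   closed under backward reduction: a step inside the function or argument
   position is charged to the corresponding subderivation, a root step to the
   body's, so induction along the reduction sequence rebuilds the derivation. *)
From Stdlib Require Import Arith Lia.

Lemma pow_step_trans k1 k2 s t u :
  pow_step k1 s t -> pow_step k2 t u -> pow_step (k1 + k2) s u.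
Proof.
  induction 1 as [| k s s' t Hstep _ IH]; intros Hrest; simpl.
  - exact Hrest.
  - apply powS with s'; auto.
Qed.

Lemma pow_step_appL k s s' t :
  pow_step k s s' -> pow_step k (app s t) (app s' t).
Proof. induction 1; econstructor; eauto using stepAppL. Qed.

Lemma pow_step_appR k s t t' :
  pow_step k t t' -> pow_step k (app (lam s) t) (app (lam s) t').
Proof. induction 1; econstructor; eauto using stepAppR. Qed.

Lemma eval_abstraction s k t : eval s k t -> is_abstraction t.
Proof. induction 1; [exists s; reflexivity | assumption]. Qed.

Lemma eval_pow_step s k t : eval s k t -> pow_step k s t.
Proof.
  induction 1 as [s | s t s' t' u k1 k2 k3 _ IHs _ IHt _ IHbody].
  - constructor.
  - replace (k1 + k2 + 1 + k3) with (k1 + (k2 + S k3)) by lia.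
    apply pow_step_trans with (app (lam s') t); [now apply pow_step_appL |].
    apply pow_step_trans with (app (lam s') (lam t')); [now apply pow_step_appR |].
    apply powS with (subst s' 0 (lam t')); [apply stepBeta | exact IHbody].
Qed.

Lemma eval_lam_inv s k u : eval (lam s) k u -> k = 0 /\ u = lam s.
Proof. now inversion 1. Qed.

Lemma step_eval s s' k u : step s s' -> eval s' k u -> eval s (S k) u.
Proof.
  intros Hstep; revert k u.
  induction Hstep as [s t | s s' t _ IH | s t t' _ IH]; intros k u Hev.
  - change (S k) with (0 + 0 + 1 + k).
    apply evalApp with s t; [constructor | constructor | exact Hev].
  - inversion Hev as [| ? ? s1 t1 ? k1 k2 k3 Hs Ht Hbody]; subst.
    replace (S (k1 + k2 + 1 + k3)) with (S k1 + k2 + 1 + k3) by lia.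
    eapply evalApp; eauto.
  - inversion Hev as [| ? ? s1 t1 ? k1 k2 k3 Hs Ht Hbody]; subst.
    destruct (eval_lam_inv _ _ _ Hs) as [-> [= <-]].
    replace (S (0 + k2 + 1 + k3)) with (0 + S k2 + 1 + k3) by lia.
    eapply evalApp; eauto.
Qed.

Lemma pow_step_eval k s t : pow_step k s (lam t) -> eval s k (lam t).
Proof.
  remember (lam t) as v eqn:Hv.
  induction 1 as [s | k s s' u Hstep _ IH]; subst.
  - constructor.
  - apply step_eval with s'; auto.
Qed.

Theorem lemmaA3 (s t : term) (k : nat) :
  eval s k t <-> (pow_step k s t /\ is_abstraction t).
Proof.
  split.
  - intros Hev. split; [exact (eval_pow_step _ _ _ Hev) | exact (eval_abstraction _ _ _ Hev)].
  - intros [Hpow [t' ->]]. now apply pow_step_eval.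
Qed.
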